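(* Let $\Gamma$ be a splice diagram satisfying the edge determinant condition. Then for all nodes $u,v,w$ of $\Gamma$ we have $\ell_{u,v}\,\ell_{u,w}\leq d_u\,\ell_{v,w}$, with equality if and only if $u$ lies on the geodesic $[v,w]$.
   Context: A splice diagram is a finite tree $\Gamma$ with at least one vertex of valency $\geq3$ and no vertex of valency $2$; vertices of valency $1$ are leaves, the others nodes. For each node $v$ and edge $e$ adjacent to $v$ a positive integer weight $d_{v,e}$ is given; $d_{v,u}:=d_{v,e}$ for $e$ the edge at $v$ on the geodesic $[v,u]$. The total weight of a node is $d_v=\prod_{e\ni v}d_{v,e}$. For distinct vertices $u,v$, $\ell_{u,v}$ is the product of all weights $d_{w,e}$ with $w$ a node on $[u,v]$ and $e$ an edge at $w$ not contained in $[u,v]$; $\ell_{v,v}:=d_v$. Edge determinant condition: $d_{u,v}d_{v,u}>\ell_{u,v}$ for each edge $[u,v]$ between two nodes. *)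

From mathcomp Require Import all_boot.
Set Implicit Arguments. Unset Strict Implicit. Unset Printing Implicit Defensive.

Section Splice.
Variable T : finType.
Variable e : rel T.
(* weight function: dw v u is the weight d_{v,e} at v of the edge e = {v,u},
   meaningful when v is a node and u is adjacent to v *)
Variable dw : T -> T -> nat.

Definition simple_path (x y : T) (p : seq T) : bool :=
  [&& path e x p, last x p == y & uniq (x :: p)].

Definition is_tree : Prop :=
  symmetric e /\ irreflexive e /\
  forall x y : T, exists! p : seq T, simple_path x y p.

Definition valency (v : T) : nat := #|[set u | e v u]|.
Definition is_leaf (v : T) : bool := valency v == 1.
Definition is_node (v : T) : bool := ~~ is_leaf v.

(* z lies on the geodesic [x,y] (the unique simple path from x to y).
   Simple paths have fewer than #|T| edges, so we quantify over tuples. *)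
Definition on_geod (x y z : T) : bool :=
  [exists n : 'I_#|T|.+1, exists p : n.-tuple T,
      simple_path x y p && (z \in x :: p)].

Definition edge_on_geod (x y a b : T) : bool :=
  [exists n : 'I_#|T|.+1, exists p : n.-tuple T,
      simple_path x y p &&
      (((a, b) \in zip (x :: p) p) || ((b, a) \in zip (x :: p) p))].

Definition dtot (v : T) : nat := \prod_(u | e v u) dw v u.

Definition ell (u v : T) : nat :=
  if u == v then dtot v else
  \prod_(w | is_node w && on_geod u v w)
     \prod_(n | e w n && ~~ edge_on_geod u v w n) dw w n.

Definition splice_diagram : Prop :=
  [/\ is_tree,
      exists v : T, 3 <= valency v,
      forall v : T, valency v != 2
    & forall v u : T, is_node v -> e v u -> 0 < dw v u].

Definition edge_determinant_condition : Prop :=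
  forall u v : T, is_node u -> is_node v -> e u v ->
    ell u v < dw u v * dw v u.

End Splice.

(* For a set S of vertices let w(S) be the product, over the nodes x of S, of
   the weights d_{x,f} of the edges f leaving S; then l_{u,v} = w([u,v]).
   If a node c cuts a geodesic [u,v] into [u,c] and [c,v], the two halves
   share only c and no edge joins them elsewhere, so
   l_{u,c} l_{c,v} = d_c l_{u,v}.  Walking along [x,y] edge by edge, this
   identity turns the edge determinant condition into l_{x,y}^2 < d_x d_y for
   all distinct nodes x, y.  Finally let c be the median of u, v, w.  If u = c,
   i.e. u lies on [v,w], the identity is the claimed equality; otherwise
   d_c^2 l_{u,v} l_{u,w} = l_{u,c}^2 l_{c,v} l_{c,w}
     < d_u d_c l_{c,v} l_{c,w} = d_c^2 d_u l_{v,w}. *)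

From mathcomp Require Import all_boot zify.
Set Implicit Arguments. Unset Strict Implicit. Unset Printing Implicit Defensive.

Lemma mem_zip (S1 S2 : eqType) (s : seq S1) (t : seq S2) a b :
  (a, b) \in zip s t -> (a \in s) && (b \in t).
Proof.
elim: s t => [|c s IHs] [|d t] //=.
by rewrite !inE => /orP[/eqP[-> ->] | /IHs/andP[-> ->]]; rewrite ?eqxx ?orbT.
Qed.

Lemma mem_zip_nth (S : eqType) (x : S) p i :
  i < size p -> (nth x (x :: p) i, nth x p i) \in zip (x :: p) p.
Proof.
move=> lt_i; have lt_iz : i < size (zip (x :: p) p) by rewrite size2_zip /=.
by have := mem_nth (x, x) lt_iz; rewrite nth_zip_cond lt_iz.
Qed.

Section SimplePaths.

Variables (T : finType) (e : rel T).

Lemma last_take_nth (x : T) p k :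
  k <= size p -> last x (take k p) = nth x (x :: p) k.
Proof.
move=> le_k; rewrite (last_nth x) size_takel //.
by case: k le_k => //= k le_k; rewrite nth_take.
Qed.

Lemma simple_path_take x y p k : simple_path e x y p -> k <= size p ->
  simple_path e x (nth x (x :: p) k) (take k p).
Proof.
case/and3P=> e_p _ uniq_p le_k; apply/and3P; split.
- exact: take_path.
- by rewrite last_take_nth.
- exact: (take_uniq k.+1 uniq_p).
Qed.

Lemma simple_path_drop x y p k : simple_path e x y p -> k <= size p ->
  simple_path e (nth x (x :: p) k) y (drop k p).
Proof.
case/and3P=> e_p /eqP last_p uniq_p le_k; apply/and3P; split.
- by move: e_p; rewrite -{1}(cat_take_drop k p) cat_path last_take_nth // => /andP[].
- by rewrite -last_take_nth // -last_cat cat_take_drop last_p.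
- by have := drop_uniq k uniq_p; rewrite (@drop_nth _ x k (x :: p)).
Qed.

End SimplePaths.

Section SpliceTree.

Variables (T : finType) (e : rel T).
Hypotheses (e_sym : symmetric e) (e_irr : irreflexive e).
Hypothesis unique_simple_path : forall x y : T, exists! p, simple_path e x y p.

Lemma exists_simple_path x y : exists p, simple_path e x y p.
Proof. by case: (unique_simple_path x y) => p []; exists p. Qed.

Definition geodesic x y : seq T := xchoose (exists_simple_path x y).

Lemma geodesicP x y : simple_path e x y (geodesic x y).
Proof. exact: xchooseP. Qed.

Lemma geodesicE x y p : simple_path e x y p -> geodesic x y = p.
Proof.
case: (unique_simple_path x y) => q [_ q_uniq] /q_uniq <-.
by symmetry; apply/q_uniq/geodesicP.
Qed.

Lemma geodesic_path x y : path e x (geodesic x y).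
Proof. by case/and3P: (geodesicP x y). Qed.

Lemma geodesic_last x y : last x (geodesic x y) = y.
Proof. by case/and3P: (geodesicP x y) => _ /eqP. Qed.

Lemma geodesic_uniq x y : uniq (x :: geodesic x y).
Proof. by case/and3P: (geodesicP x y). Qed.

Lemma geodesic_refl x : geodesic x x = [::].
Proof. by apply: geodesicE; rewrite /simple_path /= eqxx. Qed.

Lemma geodesic_edge x y : e x y -> geodesic x y = [:: y].
Proof.
move=> e_xy; apply: geodesicE; rewrite /simple_path /= e_xy eqxx !inE /= andbT.
by apply: contraTneq e_xy => ->; rewrite e_irr.
Qed.

Lemma size_geodesic x y : size (geodesic x y) < #|T|.+1.
Proof.
have := max_card (mem (x :: geodesic x y)).
by rewrite (card_uniqP (geodesic_uniq x y)) ltnS => /ltnW.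
Qed.

Lemma on_geodE x y z : on_geod e x y z = (z \in x :: geodesic x y).
Proof.
apply/existsP/idP => [[n /existsP[p /andP[/geodesicE-> //]]] | z_on].
exists (Ordinal (size_geodesic x y)); apply/existsP.
by exists (in_tuple (geodesic x y)); rewrite geodesicP.
Qed.

Lemma geodesic_edge_consecutive x y i j : i < j -> j <= size (geodesic x y) ->
  e (nth x (x :: geodesic x y) i) (nth x (x :: geodesic x y) j) -> j = i.+1.
Proof.
move=> lt_ij le_j e_ij; set p := geodesic x y in le_j e_ij *.
have sp_j := simple_path_take (geodesicP x y) le_j.
have le_i : i <= size (take j p) by rewrite size_takel // ltnW.
have := simple_path_drop sp_j le_i.
rewrite -/p -[x :: take j p]/(take j.+1 (x :: p)) nth_take ?ltnS ?(ltnW lt_ij) //.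
move/geodesicE; rewrite geodesic_edge // => /(congr1 size) /=.
by rewrite size_drop size_takel //; lia.
Qed.

Lemma index_geodesic_edge x y a b :
  a \in x :: geodesic x y -> b \in x :: geodesic x y -> e a b ->
  index b (x :: geodesic x y) = (index a (x :: geodesic x y)).+1 \/
  index a (x :: geodesic x y) = (index b (x :: geodesic x y)).+1.
Proof.
set L := x :: geodesic x y => a_on b_on e_ab.
have idx_le c : c \in L -> index c L <= size (geodesic x y) by rewrite -index_mem.
case: (ltngtP (index a L) (index b L)) => [lt_ab | lt_ba | eq_ab].
- by left; apply: geodesic_edge_consecutive lt_ab (idx_le _ b_on) _; rewrite !nth_index.
- by right; apply: geodesic_edge_consecutive lt_ba (idx_le _ a_on) _; rewrite !nth_index // e_sym.
- by move: e_ab; rewrite -(nth_index x a_on) eq_ab nth_index // e_irr.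
Qed.

Lemma mem_geodesic_prefix x y z a : z \in x :: geodesic x y ->
  (a \in x :: geodesic x z) =
  (a \in x :: geodesic x y) &&
  (index a (x :: geodesic x y) <= index z (x :: geodesic x y)).
Proof.
set L := x :: geodesic x y => z_on.
have le_z : index z L <= size (geodesic x y) by move: z_on; rewrite -index_mem.
have := geodesicE (simple_path_take (geodesicP x y) le_z).
rewrite -/L nth_index // => ->; rewrite -[x :: take _ _]/(take (index z L).+1 L).
case a_on: (a \in L); rewrite ?andTb ?andFb; first by rewrite in_take // ltnS.
by apply/negbTE; apply: contraFN a_on => /mem_take.
Qed.

Lemma mem_geodesic_suffix x y z a : z \in x :: geodesic x y ->
  (a \in z :: geodesic z y) =
  (a \in x :: geodesic x y) &&
  (index z (x :: geodesic x y) <= index a (x :: geodesic x y)).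
Proof.
set L := x :: geodesic x y => z_on; set k := index z L.
have le_z : k <= size (geodesic x y) by move: z_on; rewrite -index_mem.
have := geodesicE (simple_path_drop (geodesicP x y) le_z).
rewrite -/L nth_index // => ->; rewrite -[z :: _]/(z :: drop k.+1 L) -drop_index //.
have : uniq (take k L ++ drop k L) by rewrite cat_take_drop geodesic_uniq.
rewrite cat_uniq => /and3P[_ disj _].
case a_on: (a \in L); rewrite ?andTb ?andFb; last first.
  by apply/negbTE; apply: contraFN a_on => /mem_drop.
rewrite leqNgt -(in_take _ a_on); apply/idP/idP => [a_drop | a_take].
  by apply: contraNN disj => a_take; apply/hasP; exists a.
by move: a_on; rewrite -{1}(cat_take_drop k L) mem_cat (negbTE a_take).
Qed.

Lemma geodesic_sym x y : y :: geodesic y x = rev (x :: geodesic x y).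
Proof.
have rev_L : rev (x :: geodesic x y) = y :: rev (belast x (geodesic x y)).
  by rewrite lastI rev_rcons geodesic_last.
rewrite rev_L; congr (_ :: _); apply: geodesicE; apply/and3P; split.
- rewrite -{1}(geodesic_last x y) rev_path.
  by rewrite (@eq_path _ _ e) ?geodesic_path // => a b /=; exact: e_sym.
- by rewrite -(last_cons y y) -rev_L rev_cons last_rcons.
- by rewrite -rev_L rev_uniq geodesic_uniq.
Qed.

Lemma mem_geodesic_sym x y a : (a \in y :: geodesic y x) = (a \in x :: geodesic x y).
Proof. by rewrite geodesic_sym mem_rev. Qed.

Lemma edge_on_geodE x y a b : a \in x :: geodesic x y -> e a b ->
  edge_on_geod e x y a b = (b \in x :: geodesic x y).
Proof.
set L := x :: geodesic x y => a_on e_ab.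
apply/existsP/idP => [[n /existsP[p /andP[/geodesicE <-]]] | b_on].
  by case/orP=> /mem_zip/andP[] // _ b_in; rewrite inE b_in orbT.
have zip_edge c d : c \in L -> d \in L -> index d L = (index c L).+1 ->
    (c, d) \in zip L (geodesic x y).
  move=> c_on d_on idx_d; have := index_mem d L; rewrite d_on idx_d ltnS => lt_c.
  have := mem_zip_nth x lt_c.
  by rewrite -[nth x (geodesic x y) _]/(nth x L (index c L).+1) -idx_d !nth_index.
exists (Ordinal (size_geodesic x y)); apply/existsP; exists (in_tuple (geodesic x y)).
rewrite /= geodesicP /=.
case: (index_geodesic_edge a_on b_on e_ab) => idx.
  by apply/orP; left; apply: zip_edge.
by apply/orP; right; apply: zip_edge.
Qed.

Lemma geodesic_cons x y : x != y -> exists2 m, e x m & geodesic x y = m :: geodesic m y.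
Proof.
move=> neq_xy; case p_def: (geodesic x y) => [|m q].
  by move: (geodesic_last x y); rewrite p_def => /= eq_xy; rewrite eq_xy eqxx in neq_xy.
exists m; first by have := geodesic_path x y; rewrite p_def => /andP[].
congr (_ :: _); symmetry; apply: geodesicE.
by have := simple_path_drop (k := 1) (geodesicP x y); rewrite p_def drop1 => /(_ isT).
Qed.

Lemma interior_node x y z : z \in x :: geodesic x y -> z != x -> z != y -> is_node e z.
Proof.
set p := geodesic x y => z_on neq_zx neq_zy.
have nth_z : nth x (x :: p) (index z (x :: p)) = z by rewrite nth_index.
case def_k: (index z (x :: p)) nth_z => [|j] nth_z; first by rewrite -nth_z eqxx in neq_zx.
have lt_j : j.+1 < size p.
  have := index_mem z (x :: p); rewrite z_on def_k ltnS leq_eqVlt => /orP[/eqP j_last | //].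
  by rewrite -nth_z j_last -last_nth geodesic_last eqxx in neq_zy.
have /pathP e_p := geodesic_path x y.
have e_prev : e z (nth x (x :: p) j) by rewrite e_sym -nth_z; apply/e_p/ltnW.
have e_next : e z (nth x p j.+1) by rewrite -nth_z; apply: e_p.
have neq_nb : nth x (x :: p) j != nth x p j.+1.
  by rewrite -[nth x p j.+1]/(nth x (x :: p) j.+2) nth_uniq ?geodesic_uniq //=; lia.
have : #|[set nth x (x :: p) j; nth x p j.+1]| <= #|[set u | e z u]|.
  by apply/subset_leq_card/subsetP => u; rewrite !inE => /orP[] /eqP->.
rewrite cards2 neq_nb /is_node /is_leaf /valency => le2.
by apply/eqP => card1; rewrite card1 in le2.
Qed.

Lemma geodesic_cat v c w :
  (forall z, z \in c :: geodesic c v -> z \in c :: geodesic c w -> z = c) ->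
  geodesic v w = geodesic v c ++ geodesic c w.
Proof.
move=> meet_c; apply: geodesicE; apply/and3P; split.
- by rewrite cat_path geodesic_path geodesic_last geodesic_path.
- by rewrite last_cat !geodesic_last.
rewrite -cat_cons cat_uniq geodesic_uniq /=.
have := geodesic_uniq c w; rewrite cons_uniq => /andP[c_notin ->]; rewrite andbT.
apply/hasPn => z z_cw; apply: contraNN c_notin; rewrite mem_geodesic_sym => z_cv.
have z_c : z = c by apply: meet_c; rewrite // inE z_cw orbT.
by rewrite -{1}z_c.
Qed.

Lemma exists_median u v w : exists2 c,
  c \in u :: geodesic u v & (c \in u :: geodesic u w) && (c \in v :: geodesic v w).
Proof.
(* c is the last vertex of [u,v] lying on [u,w]; past c, [c,v] and [c,w] share only c *)
set L := u :: geodesic u v.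
pose P k := (k < size L) && (nth u L k \in u :: geodesic u w).
have P0 : exists k, P k by exists 0; rewrite /P /= mem_head.
have P_le k : P k -> k <= size L by case/andP=> /ltnW.
case: (ex_maxnP P0 P_le) => k /andP[lt_k c_uw] k_max; set c := nth u L k in c_uw.
have c_uv : c \in L by apply: mem_nth.
have idx_c : index c L = k by apply: index_uniq => //; apply: geodesic_uniq.
exists c => //; rewrite c_uw (geodesic_cat (c := c)) => [|z].
  by rewrite -cat_cons mem_cat mem_geodesic_sym mem_head.
rewrite (mem_geodesic_suffix _ c_uv) (mem_geodesic_suffix _ c_uw) -/L idx_c.
case/andP=> z_uv le_kz /andP[z_uw _].
have /k_max le_zk : P (index z L) by rewrite /P index_mem z_uv nth_index.
by rewrite -(nth_index u z_uv); congr nth; apply/eqP; rewrite eqn_leq le_zk.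
Qed.

Variable dw : T -> T -> nat.
Hypothesis dw_gt0 : forall v u : T, is_node e v -> e v u -> 0 < dw v u.

Definition geod_set x y : {set T} := [set z in x :: geodesic x y].

Definition exit_weight (S : {set T}) w : nat :=
  \prod_(n | e w n && (n \notin S)) dw w n.

Definition set_weight (S : {set T}) : nat :=
  \prod_(w | is_node e w && (w \in S)) exit_weight S w.

Lemma mem_geod_set x y z : (z \in geod_set x y) = (z \in x :: geodesic x y).
Proof. exact: in_set. Qed.

Lemma dtot_gt0 v : is_node e v -> 0 < dtot e dw v.
Proof. by move=> node_v; apply: prodn_cond_gt0 => n; apply: dw_gt0. Qed.

Lemma set_weight_gt0 S : 0 < set_weight S.
Proof.
apply: prodn_cond_gt0 => w /andP[node_w _].
by apply: prodn_cond_gt0 => n /andP[e_wn _]; apply: dw_gt0.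
Qed.

Lemma geod_set_sym x y : geod_set x y = geod_set y x.
Proof. by apply/setP => z; rewrite !mem_geod_set mem_geodesic_sym. Qed.

Lemma ell_set_weight u v : is_node e u -> ell e dw u v = set_weight (geod_set u v).
Proof.
move=> node_u; rewrite /ell /set_weight; case: eqP => [<- | /eqP neq_uv].
  rewrite (big_pred1 u) => [|w]; last first.
    by rewrite /geod_set geodesic_refl !inE; case: eqP => [->|]; rewrite ?node_u ?andbF.
  apply: eq_bigl => n; rewrite /geod_set geodesic_refl !inE.
  by case e_un: (e u n) => //=; apply/esym; apply: contraTneq e_un => ->; rewrite e_irr.
apply: eq_big => [w | w /andP[_]]; first by rewrite on_geodE mem_geod_set.
rewrite on_geodE => w_on; apply: eq_bigl => n; case e_wn: (e w n) => //=.
by rewrite edge_on_geodE // mem_geod_set.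
Qed.

Lemma exit_weight_setU (A B : {set T}) w : {in B, forall n, e w n -> n \in A} ->
  exit_weight (A :|: B) w = exit_weight A w.
Proof.
move=> BA; apply: eq_bigl => n; rewrite in_setU.
case e_wn: (e w n); case n_B: (n \in B); rewrite ?orbF //=.
by rewrite (BA n n_B e_wn).
Qed.

Lemma exit_weight_junction (A B : {set T}) c : (forall z, z \in A -> z \in B -> z = c) ->
  exit_weight A c * exit_weight B c = dtot e dw c * exit_weight (A :|: B) c.
Proof.
move=> AB_c; rewrite /exit_weight /dtot !big_mkcondr -!big_split.
apply: eq_bigr => n e_cn /=.
have neq_nc : n != c by apply: contraTneq e_cn => ->; rewrite e_irr.
rewrite in_setU; case n_A: (n \in A); case n_B: (n \in B) => /=; rewrite ?muln1 ?mul1n //.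
by rewrite (AB_c n n_A n_B) eqxx in neq_nc.
Qed.

Lemma set_weight_union (A B : {set T}) c : c \in A -> c \in B -> is_node e c ->
  (forall z, z \in A -> z \in B -> z = c) ->
  (forall a b, a \in A -> b \in B -> e a b -> a = c \/ b = c) ->
  set_weight A * set_weight B = dtot e dw c * set_weight (A :|: B).
Proof.
move=> c_A c_B node_c AB_c edge_c.
have dtot_c : dtot e dw c = \prod_w (if w == c then dtot e dw c else 1).
  by rewrite -big_mkcond big_pred1_eq.
rewrite /set_weight dtot_c (big_mkcond (fun w => is_node e w && (w \in A))).
rewrite (big_mkcond (fun w => is_node e w && (w \in B))).
rewrite (big_mkcond (fun w => is_node e w && (w \in A :|: B))) -!big_split.
apply: eq_bigr => w _ /=.
case: (eqVneq w c) => [-> | neq_wc].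
  by rewrite node_c c_A c_B in_setU c_A exit_weight_junction.
rewrite mul1n in_setU; case: (is_node e w); last by [].
case w_A: (w \in A); case w_B: (w \in B); rewrite /= ?muln1 ?mul1n //.
- by rewrite (AB_c w w_A w_B) eqxx in neq_wc.
- apply/esym/exit_weight_setU => n n_B e_wn.
  by case: (edge_c w n w_A n_B e_wn) => [w_c | ->]; rewrite ?w_c ?eqxx in neq_wc.
- rewrite setUC; apply/esym/exit_weight_setU => n n_A e_wn.
  have [n_c | w_c] := edge_c n w n_A w_B (etrans (e_sym n w) e_wn).
    by rewrite n_c.
  by rewrite w_c eqxx in neq_wc.
Qed.

Lemma set_weight_split u v c : c \in u :: geodesic u v -> is_node e c ->
  set_weight (geod_set u c) * set_weight (geod_set c v) =
  dtot e dw c * set_weight (geod_set u v).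
Proof.
set L := u :: geodesic u v => c_on node_c; set k := index c L.
have in_pre a : (a \in geod_set u c) = (a \in L) && (index a L <= k).
  by rewrite mem_geod_set (mem_geodesic_prefix _ c_on).
have in_suf a : (a \in geod_set c v) = (a \in L) && (k <= index a L).
  by rewrite mem_geod_set (mem_geodesic_suffix _ c_on).
have index_k a : a \in L -> index a L = k -> a = c.
  by move=> a_on idx_a; rewrite -(nth_index u a_on) idx_a nth_index.
have -> : geod_set u v = geod_set u c :|: geod_set c v.
  apply/setP => a; rewrite in_setU in_pre in_suf mem_geod_set -/L.
  by case: (a \in L) => //=; rewrite leq_total.
apply: set_weight_union => //.
- by rewrite in_pre c_on leqnn.
- by rewrite in_suf c_on leqnn.
- move=> z; rewrite in_pre in_suf => /andP[z_on le_zk] /andP[_ le_kz].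
  by apply: index_k => //; apply/eqP; rewrite eqn_leq le_zk.
move=> a b; rewrite in_pre in_suf => /andP[a_on le_ak] /andP[b_on le_kb] e_ab.
case: (index_geodesic_edge a_on b_on e_ab) => idx.
  case: (ltngtP (index a L) k) => [lt_ak | lt_ka | eq_ak].
  - by right; apply: index_k => //; apply/eqP; rewrite eqn_leq le_kb idx andbT.
  - by move: le_ak; rewrite leqNgt lt_ka.
  - by left; apply: index_k.
left; apply: index_k => //; apply/eqP; rewrite eqn_leq le_ak idx /=.
exact: leq_trans le_kb (leqnSn _).
Qed.

Lemma dtot_exit_weight x m : e x m -> dtot e dw x = dw x m * exit_weight [set x; m] x.
Proof.
move=> e_xm; rewrite /dtot (bigD1 m e_xm); congr (_ * _); apply: eq_bigl => n.
rewrite !inE; case e_xn: (e x n) => //=.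
by have /negbTE-> : n != x by apply: contraTneq e_xn => ->; rewrite e_irr.
Qed.

Lemma set_weight_edge x m : e x m -> is_node e x -> is_node e m ->
  set_weight (geod_set x m) * (dw x m * dw m x) = dtot e dw x * dtot e dw m.
Proof.
move=> e_xm node_x node_m.
have neq_xm : x != m by apply: contraTneq e_xm => ->; rewrite e_irr.
have -> : geod_set x m = [set x; m].
  by apply/setP => z; rewrite mem_geod_set geodesic_edge // !inE.
have -> : set_weight [set x; m] = exit_weight [set x; m] x * exit_weight [set m; x] m.
  rewrite /set_weight (eq_bigl (fun w => w \in [set x; m])) => [|w]; last first.
    by rewrite !inE; do 2!case: eqVneq => [->|_]; rewrite ?andbT ?andbF.
  by rewrite big_setU1 ?inE //= big_set1 setUC.
rewrite (dtot_exit_weight e_xm) (dtot_exit_weight (_ : e m x)) 1?e_sym //.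
by rewrite mulnACA [dw x m * _]mulnC [dw m x * _]mulnC.
Qed.

Hypothesis edge_det : forall u v : T, is_node e u -> is_node e v -> e u v ->
  ell e dw u v < dw u v * dw v u.

Lemma set_weight_edge_lt x m : e x m -> is_node e x -> is_node e m ->
  set_weight (geod_set x m) ^ 2 < dtot e dw x * dtot e dw m.
Proof.
move=> e_xm node_x node_m.
rewrite -(set_weight_edge e_xm node_x node_m) -mulnn ltn_pmul2l ?set_weight_gt0 //.
by rewrite -ell_set_weight //; apply: edge_det.
Qed.

Lemma set_weight_lt x y : x != y -> is_node e x -> is_node e y ->
  set_weight (geod_set x y) ^ 2 < dtot e dw x * dtot e dw y.
Proof.
have [n] := ubnP (size (geodesic x y)).
elim: n x => // n IHn x lt_n neq_xy node_x node_y.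
have [m e_xm geodesic_xy] := geodesic_cons neq_xy.
have [m_y | neq_my] := eqVneq m y.
  by rewrite -m_y in node_y *; apply: set_weight_edge_lt.
have m_on : m \in x :: geodesic x y by rewrite geodesic_xy !inE eqxx orbT.
have neq_mx : m != x by apply: contraTneq e_xm => ->; rewrite e_irr.
have node_m := interior_node m_on neq_mx neq_my.
have lt_xm := set_weight_edge_lt e_xm node_x node_m.
have lt_my : set_weight (geod_set m y) ^ 2 < dtot e dw m * dtot e dw y.
  by apply: IHn => //; move: lt_n; rewrite geodesic_xy.
have := ltn_mul lt_xm lt_my; rewrite -expnMn set_weight_split // expnMn.
have dm_gt0 := dtot_gt0 node_m.
have -> : dtot e dw x * dtot e dw m * (dtot e dw m * dtot e dw y) =
          dtot e dw m ^ 2 * (dtot e dw x * dtot e dw y) by lia.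
by rewrite ltn_pmul2l // expn_gt0 dm_gt0.
Qed.

Lemma ell_mul_on_geodesic u v w : is_node e u -> is_node e v ->
  u \in v :: geodesic v w -> ell e dw u v * ell e dw u w = dtot e dw u * ell e dw v w.
Proof.
move=> node_u node_v u_on; rewrite !ell_set_weight // geod_set_sym.
exact: set_weight_split.
Qed.

Lemma ell_mul_lt_off_geodesic u v w : is_node e u -> is_node e v -> is_node e w ->
  u \notin v :: geodesic v w -> ell e dw u v * ell e dw u w < dtot e dw u * ell e dw v w.
Proof.
move=> node_u node_v node_w u_off; rewrite !ell_set_weight //.
have [c c_uv /andP[c_uw c_vw]] := exists_median u v w.
have neq_uc : u != c by apply: contraNneq u_off => ->.
have node_c : is_node e c.
  have [-> // | neq_cv] := eqVneq c v; have [-> // | neq_cw] := eqVneq c w.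
  exact: interior_node c_vw neq_cv neq_cw.
have lt_uc := set_weight_lt neq_uc node_u node_c.
have split_v := set_weight_split c_uv node_c.
have split_w := set_weight_split c_uw node_c.
have split_vw := set_weight_split c_vw node_c; rewrite geod_set_sym in split_vw.
set a := set_weight (geod_set u c) in lt_uc split_v split_w.
set b := set_weight (geod_set c v) in split_v split_vw.
set g := set_weight (geod_set c w) in split_w split_vw.
set dc := dtot e dw c in split_v split_w split_vw.
have dc_gt0 : 0 < dc by apply: dtot_gt0.
rewrite -(ltn_pmul2l (_ : 0 < dc ^ 2)) ?expn_gt0 ?dc_gt0 //.
rewrite -mulnn mulnACA -split_v -split_w mulnACA mulnn.
have -> : dc * dc * (dtot e dw u * set_weight (geod_set v w)) = dtot e dw u * dc * (b * g).
  by rewrite split_vw; lia.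
by rewrite ltn_pmul2r // muln_gt0 !set_weight_gt0.
Qed.

End SpliceTree.

Unset Implicit Arguments.

Theorem proposition2p10 (T : finType) (e : rel T) (dw : T -> T -> nat) :
  splice_diagram e dw ->
  edge_determinant_condition e dw ->
  forall u v w : T, is_node e u -> is_node e v -> is_node e w ->
    ell e dw u v * ell e dw u w <= dtot e dw u * ell e dw v w /\
    (ell e dw u v * ell e dw u w = dtot e dw u * ell e dw v w <->
     on_geod e v w u).
Proof.
move=> [[e_sym [e_irr tree]] _ _ dw_gt0] edc u v w node_u node_v node_w.
rewrite (on_geodE tree); have [u_on | u_off] := boolP (u \in v :: geodesic tree v w).
  by rewrite (ell_mul_on_geodesic e_sym e_irr dw node_u node_v u_on).
have lt_uvw := ell_mul_lt_off_geodesic e_sym e_irr dw_gt0 edc node_u node_v node_w u_off.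
split; first exact: ltnW.
by split=> // eq_uvw; rewrite eq_uvw ltnn in lt_uvw.
Qed.
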